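(* Assume (A1). Let $g:\mathcal X\to\{0,1\}$ and let $u$ be the solution of problem (P) with boundary data $g|_\Gamma$. Let $k$ be the smallest integer strictly larger than $$\frac{2\log 2}{1-\alpha+2\alpha\delta}=\frac{2(p-1)\log 2}{p-2+2\delta}.$$ Then every $x\in\mathcal X\setminus A_k$ is classified correctly, i.e. $g(x)=\mathbb 1_{u(x)\ge 1/2}$.
   Context: $\mathcal X$ is a finite vertex set and $W=(w_{xy})$ a symmetric matrix of nonnegative weights defining a connected graph, with degrees $d_x=\sum_{y}w_{xy}$ and neighbor sets $N_x=\{y\in\mathcal X:w_{xy}>0\}$. For $p\ge2$, $\alpha=1/(p-1)$, and $$\mathcal L_p u(x)=\alpha\,\frac{1}{d_x}\sum_{y}w_{xy}\big(u(x)-u(y)\big)+(1-\alpha)\Big(u(x)-\tfrac12\big(\max_{N_x}u+\min_{N_x}u\big)\Big).$$ $\Gamma\subset\mathcal X$ is the set of labeled vertices. Problem (P): find $u:\mathcal X\to\mathbb R$ with $\mathcal L_pu(x)=0$ for $x\in\mathcal X\setminus\Gamma$ and $u=g$ on $\Gamma$; it has a unique solution. Assumption (A1): $\Gamma\cap N_x\neq\varnothing$ for every $x\in\mathcal X$. $\delta=\min_{x\in\mathcal X}\frac{\sum_{y}w_{xy}\mathbb 1_{y\in\Gamma}}{\sum_{z}w_{xz}}$. The graph distance $\operatorname{dist}(x,y)$ is the number of edges of a shortest path from $x$ to $y$, and $\operatorname{dist}(x,A)=\min_{y\in A}\operatorname{dist}(x,y)$ (taken to be $+\infty$ if $A=\varnothing$).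 For $i=0,1$ let $\mathcal X_i=\{x\in\mathcal X:g(x)=i\}$, and for an integer $m\ge0$, $A_m^i=\{x\in\mathcal X_i:\operatorname{dist}(x,\mathcal X_{1-i})\le m\}$, $A_m=A_m^0\cup A_m^1$. *)

From HB Require Import structures.
From mathcomp Require Import all_boot all_order all_algebra.
From mathcomp Require Import all_classical all_reals all_analysis.
Set Implicit Arguments. Unset Strict Implicit. Unset Printing Implicit Defensive.
Import Order.TTheory GRing.Theory Num.Theory.
Local Open Scope ring_scope.

Section GraphDefs.
Variables (R : realType) (X : finType) (W : X -> X -> R).

Definition edge : rel X := fun x y => 0 < W x y.

Definition deg (x : X) : R := \sum_(y : X) W x y.

Definition connected_graph : Prop := forall x y : X, connect edge x y.

Definition nbr0 (x : X) : X := odflt x [pick y | edge x y].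

(* max_{N_x} u and min_{N_x} u (the default value is the value at a
   neighbour, so these are the genuine max/min whenever N_x is nonempty) *)
Definition nbr_max (u : X -> R) (x : X) : R :=
  \big[Num.max/u (nbr0 x)]_(y | edge x y) u y.
Definition nbr_min (u : X -> R) (x : X) : R :=
  \big[Num.min/u (nbr0 x)]_(y | edge x y) u y.

Definition Lp (p : R) (u : X -> R) (x : X) : R :=
  let alpha := 1 / (p - 1) in
  alpha * (1 / deg x) * \sum_(y : X) W x y * (u x - u y)
  + (1 - alpha) * (u x - (nbr_max u x + nbr_min u x) / 2).

Definition solves_P (p : R) (Gamma : {set X}) (gb : X -> R) (u : X -> R) : Prop :=
  (forall x, x \notin Gamma -> Lp p u x = 0) /\ (forall x, x \in Gamma -> u x = gb x).

Definition A1 (Gamma : {set X}) : Prop :=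
  forall x : X, exists y, (y \in Gamma) && edge x y.

(* delta = min_x (sum_y w_xy 1_{y in Gamma}) / (sum_z w_xz).
   The big min uses 1 as neutral element; every ratio is <= 1, so for a
   nonempty vertex set this is exactly the minimum. *)
Definition delta (Gamma : {set X}) : R :=
  \big[Num.min/1]_(x : X) ((\sum_(y in Gamma) W x y) / deg x).

Definition dist_le (m : nat) (x y : X) : Prop :=
  exists s : seq X, [/\ path edge x s, (size s <= m)%N & last x s = y].

(* x \in A_m : with i := g x, x in X_i and dist(x, X_{1-i}) <= m *)
Definition in_A (g : X -> bool) (m : nat) (x : X) : Prop :=
  exists y : X, g y = ~~ g x /\ dist_le m x y.

End GraphDefs.

From HB Require Import structures.
From mathcomp Require Import all_boot all_order all_algebra.
From mathcomp Require Import all_classical all_reals all_analysis.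
From mathcomp Require Import ring lra.
Import Order.TTheory GRing.Theory Num.Theory.
Local Open Scope ring_scope.
Set Implicit Arguments. Unset Strict Implicit. Unset Printing Implicit Defensive.

(** Since [L_p (1 - u) = - L_p u], the map [u |-> 1 - u] exchanges the two
    labels, so it suffices to show [u x < 1/2] when no vertex labeled 1 lies
    within distance [k] of [x]. The maximum principle gives [u <= 1].  At an
    unlabeled vertex whose neighbours satisfy [u <= B] and whose labeled
    neighbours carry the label 0, the equation [L_p u = 0] gives
    [u <= (1 - q) B] with [q = (1 - alpha + 2 alpha delta) / 2]: the
    random-walk average loses at least the fraction [delta] of [B] and the
    midrange [(max + min) / 2] loses half of it.  Iterating [k] times,
    [u x <= (1 - q)^k <= exp (- q k) < 1/2]. *)

Section Neighbourhood.
Variables (R : realType) (X : finType) (W : X -> X -> R).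

Definition nbr_mean (u : X -> R) (x : X) : R := (\sum_y W x y * u y) / deg W x.

Lemma dist_le_refl m x : dist_le W m x x.
Proof. by exists [::]. Qed.

Lemma dist_le_cons m x y z : edge W x y -> dist_le W m y z -> dist_le W m.+1 x z.
Proof. by move=> xy [s [ys sm sz]]; exists (y :: s); split; rewrite /= ?xy. Qed.

Lemma nbr0_edge x y : edge W x y -> edge W x (nbr0 W x).
Proof. by move=> xy; rewrite /nbr0; case: pickP => [//|/(_ y)]; rewrite xy. Qed.

Lemma nbr_max_le (u : X -> R) x y B :
  edge W x y -> (forall z, edge W x z -> u z <= B) -> nbr_max W u x <= B.
Proof. by move=> xy uB; apply: bigmax_le => //; apply/uB/(nbr0_edge xy). Qed.

Lemma nbr_min_le (u : X -> R) x y : edge W x y -> nbr_min W u x <= u y.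
Proof. exact: bigmin_le_cond. Qed.

Lemma nbr_max_subr (c : R) u x :
  nbr_max W (fun y => c - u y) x = c - nbr_min W u x.
Proof.
by apply/esym/(big_morph (fun t => c - t)) => // a b; rewrite oppr_min addr_maxr.
Qed.

Lemma nbr_min_subr (c : R) u x :
  nbr_min W (fun y => c - u y) x = c - nbr_max W u x.
Proof.
by apply/esym/(big_morph (fun t => c - t)) => // a b; rewrite oppr_max addr_minr.
Qed.

Lemma Lp_subr p (c : R) u x : Lp W p (fun y => c - u y) x = - Lp W p u x.
Proof.
rewrite /Lp /= nbr_max_subr nbr_min_subr.
have -> : \sum_y W x y * ((c - u x) - (c - u y)) = - \sum_y W x y * (u x - u y).
  by rewrite -sumrN; apply: eq_bigr => y _; ring.
rewrite mulrN; lra.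
Qed.

Lemma Lp_mean p u x : deg W x != 0 ->
  Lp W p u x = u x - (1 / (p - 1) * nbr_mean u x
                      + (1 - 1 / (p - 1)) * ((nbr_max W u x + nbr_min W u x) / 2)).
Proof.
move=> deg_neq0; rewrite /Lp /nbr_mean /=.
have -> : \sum_y W x y * (u x - u y) = deg W x * u x - \sum_y W x y * u y.
  by rewrite /deg mulr_suml -sumrB; apply: eq_bigr => y _; ring.
(* Naming [1 / (p - 1)] keeps [field] from requiring [p != 1]. *)
set a := 1 / (p - 1); by field.
Qed.

Hypothesis W_ge0 : forall x y, 0 <= W x y.

Lemma W_eq0 x y : ~~ edge W x y -> W x y = 0.
Proof. by move=> nxy; apply/eqP; rewrite eq_le W_ge0 andbT leNgt. Qed.

Lemma sum_edge_gt0 (A : {pred X}) x y :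
  y \in A -> edge W x y -> 0 < \sum_(z in A) W x z.
Proof.
move=> Ay xy; rewrite (bigD1 y) //=; apply: (lt_le_trans xy).
by rewrite lerDl sumr_ge0.
Qed.

Lemma deg_gt0 x y : edge W x y -> 0 < deg W x.
Proof. exact: (@sum_edge_gt0 predT). Qed.

Lemma nbr_mean_le (Gamma : {set X}) u x y B b : b <= B -> edge W x y ->
    (forall z, edge W x z -> u z <= B) ->
    (forall z, z \in Gamma -> edge W x z -> u z <= b) ->
  nbr_mean u x <= B - (B - b) * ((\sum_(z in Gamma) W x z) / deg W x).
Proof.
move=> bB xy uB ub; have deg_gt0x := deg_gt0 xy.
have sum_le : \sum_z W x z * u z <= B * deg W x - (B - b) * \sum_(z in Gamma) W x z.
  rewrite /deg mulr_sumr mulr_sumr [\sum_(i in Gamma) _]big_mkcond -sumrB /=.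
  apply: ler_sum => z _.
  have [xz|nxz] := boolP (edge W x z); last by rewrite W_eq0 //; case: ifP => _; lra.
  case: ifP => zG; rewrite ?mulr0 ?subr0 mulrC; last exact/ler_wpM2r/uB.
  by have := ler_wpM2l (W_ge0 x z) (ub z zG xz); lra.
by rewrite /nbr_mean ler_pdivrMr // mulrBl -mulrA divfK ?gt_eqF.
Qed.

End Neighbourhood.

Lemma solves_P_negb (R : realType) (X : finType) (W : X -> X -> R) p Gamma
    (g : X -> bool) u :
  solves_P W p Gamma (fun x => (g x : nat)%:R) u ->
  solves_P W p Gamma (fun x => (~~ g x : nat)%:R) (fun x => 1 - u x).
Proof.
case=> uL ub; split=> x xG; first by rewrite Lp_subr uL ?oppr0.
by rewrite ub //; case: (g x); rewrite /= ?subrr ?subr0.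
Qed.

Lemma expr_lt_half (R : realType) (q : R) k :
  0 <= 1 - q -> ln 2 < k%:R * q -> (1 - q) ^+ k < 1 / 2.
Proof.
move=> q_le1 ln2_lt; apply: (le_lt_trans (y := expR (- q) ^+ k)).
  by apply: lerXn2r; rewrite ?nnegrE ?expR_ge0 //; have := expR_ge1Dx (- q); lra.
rewrite -expRM_natl div1r -[2^-1]lnK ?posrE // ltr_expR lnV ?posrE //; lra.
Qed.

Section Classification.
Variables (R : realType) (X : finType) (W : X -> X -> R).
Variables (p : R) (Gamma : {set X}) (g : X -> bool) (u : X -> R).
Hypothesis W_ge0 : forall x y, 0 <= W x y.
Hypothesis p_ge2 : 2 <= p.
Hypothesis A1G : A1 W Gamma.
Hypothesis u_sol : solves_P W p Gamma (fun x => (g x : nat)%:R) u.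

Local Notation alpha := (1 / (p - 1)).
Local Notation delta := (delta W Gamma).
Local Notation q := ((1 - alpha + 2 * alpha * delta) / 2).

Lemma alpha_gt0 : 0 < alpha.
Proof. by apply: divr_gt0 => //; move: p_ge2; lra. Qed.

Lemma subr_alpha_ge0 : 0 <= 1 - alpha.
Proof. by rewrite subr_ge0 ler_pdivrMr; move: p_ge2; lra. Qed.

Lemma delta_gt0 : 0 < delta.
Proof.
apply: lt_bigmin => // x _; have [y /andP[yG xy]] := A1G x.
exact: divr_gt0 (sum_edge_gt0 W_ge0 yG xy) (deg_gt0 W_ge0 xy).
Qed.

Lemma q_gt0 : 0 < q.
Proof. by have := mulr_gt0 alpha_gt0 delta_gt0; have := subr_alpha_ge0; lra. Qed.

Lemma q_le1 : q <= 1.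
Proof.
have delta_le1 : delta <= 1 by exact: bigmin_le_id.
by have := ler_wpM2l (ltW alpha_gt0) delta_le1; have := subr_alpha_ge0; lra.
Qed.

Lemma sol_le_step x B b : x \notin Gamma -> b <= B ->
    (forall z, edge W x z -> u z <= B) ->
    (forall z, z \in Gamma -> edge W x z -> u z <= b) ->
  u x <= alpha * (B - (B - b) * delta) + (1 - alpha) * ((B + b) / 2).
Proof.
move=> xG bB uB ub; have [y /andP[yG xy]] := A1G x.
have u_mean : u x = alpha * nbr_mean W u x
                    + (1 - alpha) * ((nbr_max W u x + nbr_min W u x) / 2).
  by apply/eqP; rewrite -subr_eq0 -Lp_mean ?lt0r_neq0 ?(deg_gt0 W_ge0 xy) ?u_sol.1.
have mean_le : nbr_mean W u x <= B - (B - b) * delta.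
  apply: le_trans (nbr_mean_le W_ge0 bB xy uB ub) _.
  by rewrite lerD2l lerN2 ler_wpM2l ?subr_ge0 //; apply: bigmin_le.
have midrange_le : (nbr_max W u x + nbr_min W u x) / 2 <= (B + b) / 2.
  rewrite ler_pM2r //; apply: lerD; first exact: nbr_max_le xy uB.
  exact: le_trans (nbr_min_le u xy) (ub y yG xy).
rewrite u_mean; apply: lerD; apply: ler_wpM2l => //.
  exact: ltW alpha_gt0.
exact: subr_alpha_ge0.
Qed.

Lemma sol_boundary x : x \in Gamma -> u x = (g x : nat)%:R.
Proof. exact: u_sol.2. Qed.

Lemma sol_le1 x : u x <= 1.
Proof.
have label_le1 z : z \in Gamma -> u z <= 1.
  by move=> zG; rewrite sol_boundary //; case: (g z).
have [m _ u_le_m] := @arg_maxP _ _ _ x predT u isT.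
apply: le_trans (u_le_m x isT) _; rewrite leNgt; apply/negP => m_gt1.
have mG : m \notin Gamma by apply: contraTN m_gt1 => /label_le1; rewrite leNgt.
have step := sol_le_step mG (ltW m_gt1) (fun z _ => u_le_m z isT)
  (fun z zG _ => label_le1 z zG).
have gap_gt0 : 0 < alpha * ((u m - 1) * delta).
  by rewrite mulr_gt0 ?alpha_gt0 ?mulr_gt0 ?subr_gt0 ?delta_gt0.
have := ler_wpM2l subr_alpha_ge0 (ltW m_gt1).
lra.
Qed.

Lemma sol_decay j x : (forall z, g z -> ~ dist_le W j x z) -> u x <= (1 - q) ^+ j.
Proof.
have q_ge0 : 0 <= 1 - q by rewrite subr_ge0 q_le1.
elim: j x => [|j IH] x far; first by rewrite expr0 sol_le1.
have gx : g x = false by apply/negP => gx; apply: far gx (dist_le_refl W _ _).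
have far_label z : edge W x z -> g z = false.
  by move=> xz; apply/negP => gz; apply: far gz (dist_le_cons xz (dist_le_refl W _ _)).
have [xG|xG] := boolP (x \in Gamma); first by rewrite sol_boundary // gx exprn_ge0.
have nbr_le z : edge W x z -> u z <= (1 - q) ^+ j.
  by move=> xz; apply: IH => w gw /(dist_le_cons xz); apply: far.
have label_le0 z : z \in Gamma -> edge W x z -> u z <= 0.
  by move=> zG xz; rewrite sol_boundary // far_label.
have := sol_le_step xG (exprn_ge0 j q_ge0) nbr_le label_le0.
rewrite exprS; lra.
Qed.

Lemma sol_lt_half k x : 2 * ln 2 / (1 - alpha + 2 * alpha * delta) < k%:R ->
  (forall z, g z -> ~ dist_le W k x z) -> u x < 1 / 2.
Proof.
move=> k_large far; apply: le_lt_trans (sol_decay far) (expr_lt_half _ _).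
  by rewrite subr_ge0 q_le1.
by move: k_large; rewrite ltr_pdivrMr; [lra | have := q_gt0; lra].
Qed.

End Classification.

Theorem mainTheorem6 (R : realType) (X : finType) (W : X -> X -> R)
  (p : R) (Gamma : {set X}) (g : X -> bool) (u : X -> R) (k : nat) :
  (forall x y, W x y = W y x) ->
  (forall x y, 0 <= W x y) ->
  connected_graph W ->
  2 <= p ->
  A1 W Gamma ->
  solves_P W p Gamma (fun x => (g x : nat)%:R) u ->
  let alpha := 1 / (p - 1) in
  let c := 2 * ln (2 : R) / (1 - alpha + 2 * alpha * delta W Gamma) in
  c < k%:R ->
  (forall m : nat, c < m%:R -> (k <= m)%N) ->
  forall x : X, ~ in_A W g k x -> g x = (1 / 2 <= u x).
Proof.
move=> _ W_ge0 _ p_ge2 A1G u_sol alpha c k_large _ x x_far.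
case gx: (g x).
- have := sol_lt_half W_ge0 p_ge2 A1G (solves_P_negb u_sol) k_large.
  have far z : ~~ g z -> ~ dist_le W k x z.
    by move=> gz xz; apply: x_far; exists z; rewrite gx (negbTE gz).
  by move=> /(_ x far) ux; apply/esym/idP; lra.
- have far z : g z -> ~ dist_le W k x z.
    by move=> gz xz; apply: x_far; exists z; rewrite gx gz.
  have := sol_lt_half W_ge0 p_ge2 A1G u_sol k_large far.
  by rewrite ltNge => /negbTE.
Qed.
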